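(* For every $n\ge1$, the $\{\mathbf{3},\mathbf{2}+\mathbf{2}\}$-free naturally labelled posets on $[n]$ are in bijection with the set $\mathcal B_n$ of bicoloured permutations $\sigma$ of $[n]$ satisfying all of the following: (i) $\sigma(1)$ is blue; (ii) there is no $i$ with $\sigma(i),\sigma(i+1)$ both blue and $\sigma(i)<\sigma(i+1)$; (iii) there is no $i$ with $\sigma(i),\sigma(i+1)$ both red and $\sigma(i)>\sigma(i+1)$; (iv) there are no $i<j$ with $\sigma(i)$ blue, $\sigma(j)$ red and $\sigma(i)>\sigma(j)$.
   Context: A partial order $\preceq$ on $[n]$ is naturally labelled if $x\prec y$ implies $x<y$. It is $\mathbf{3}$-free if there are no $x\prec y\prec z$. It is $(\mathbf{2}+\mathbf{2})$-free if there are no distinct $i\prec j$, $k\prec\ell$ with each of $i,j$ incomparable to each of $k,\ell$. A bicoloured permutation of $[n]$ is a permutation $\sigma$ of $[n]$ in which each entry is coloured either blue or red. *)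

(* [n] = {1..n} is represented by 'I_n = {0..n-1}
   (order-preserving relabelling i |-> i-1). *)
From mathcomp Require Import all_boot all_fingroup.
Set Implicit Arguments. Unset Strict Implicit. Unset Printing Implicit Defensive.

Section Defs.
Variable n : nat.

Definition prel := {set 'I_n * 'I_n}.

Definition le_R (R : prel) (x y : 'I_n) : bool := (x, y) \in R.
Definition lt_R (R : prel) (x y : 'I_n) : bool := (x != y) && le_R R x y.
Definition incomp_R (R : prel) (x y : 'I_n) : bool := ~~ le_R R x y && ~~ le_R R y x.

Definition is_partial_order (R : prel) : bool :=
  [&& [forall x, le_R R x x],
      [forall x, forall y, le_R R x y && le_R R y x ==> (x == y)] &
      [forall x, forall y, forall z, le_R R x y && le_R R y z ==> le_R R x z]].

Definition naturally_labelled (R : prel) : bool :=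
  [forall x, forall y, lt_R R x y ==> (x < y)%N].

Definition three_free (R : prel) : bool :=
  ~~ [exists x, exists y, exists z, lt_R R x y && lt_R R y z].

Definition two_two_free (R : prel) : bool :=
  ~~ [exists i, exists j, exists k, exists l,
        [&& uniq [:: i; j; k; l], lt_R R i j, lt_R R k l,
            incomp_R R i k, incomp_R R i l, incomp_R R j k & incomp_R R j l]].

Definition good_poset (R : prel) : bool :=
  [&& is_partial_order R, naturally_labelled R, three_free R & two_two_free R].

(* A bicoloured permutation: a permutation s of [n] together with a colouring
   of its entries; the entry s i is blue iff col (s i) = true, red otherwise. *)
Definition bicol_perm := ('S_n * {ffun 'I_n -> bool})%type.

Definition blue (p : bicol_perm) (i : 'I_n) : bool := p.2 (p.1 i).
Definition red (p : bicol_perm) (i : 'I_n) : bool := ~~ blue p i.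
Definition val_at (p : bicol_perm) (i : 'I_n) : nat := nat_of_ord (p.1 i).

Definition in_B (p : bicol_perm) : bool :=
  [&&
      [forall i : 'I_n, (val i == 0%N) ==> blue p i],
      [forall i : 'I_n, forall j : 'I_n,
         [&& val j == (val i).+1, blue p i, blue p j & (val_at p i < val_at p j)%N] == false],
      [forall i : 'I_n, forall j : 'I_n,
         [&& val j == (val i).+1, red p i, red p j & (val_at p i > val_at p j)%N] == false] &
      [forall i : 'I_n, forall j : 'I_n,
         [&& (i < j)%N, blue p i, red p j & (val_at p i > val_at p j)%N] == false]].

End Defs.

(* A {3, 2+2}-free poset has height at most two, so it is determined by its
   minimal elements (coloured blue) together with any listing of [n] in which
   x ≺ y exactly when x is blue, y is red and x is listed before y.  By
   (2+2)-freeness the strict down-sets of the red elements form a chain, so a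
   red element can be placed at the level given by the size of its down-set,
   and a blue one at the least level of a red element above it (or at the top
   when it is below nothing).  Listing the elements level by level, blues
   before reds, blues decreasing and reds increasing, gives the unique listing
   satisfying (i)-(iv): conversely, for a listing in B the runs of equal
   colour are monotone by (ii)-(iii), which forces it to be the level listing
   of the poset it induces. *)
From mathcomp Require Import all_boot all_fingroup.
From mathcomp Require Import zify.
Set Implicit Arguments. Unset Strict Implicit. Unset Printing Implicit Defensive.

Section Rank.
Variable n : nat.
Implicit Types (K : 'I_n -> nat) (x y z : 'I_n) (A : {set 'I_n}).

Lemma card_notin_lt A x : x \notin A -> #|A| < n.
Proof.
move=> xA; have : A \subset [set~ x].
  by apply/subsetP => y yA; rewrite !inE; apply: contraNneq xA => <-.
move/subset_leq_card; rewrite cardsC1 card_ord.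
by have := ltn_ord x; lia.
Qed.

Lemma card_ltn_ord k : k <= n -> #|[set j : 'I_n | j < k]| = k.
Proof.
move=> kn; have -> : [set j : 'I_n | j < k] = [set widen_ord kn j | j : 'I_k].
  apply/setP => j; rewrite inE; apply/idP/imsetP => [jk | [j' _ ->]]; last by rewrite /= ltn_ord.
  by exists (Ordinal jk); last exact: val_inj.
rewrite card_imset ?card_ord // => i j /(congr1 val) ij.
exact: val_inj.
Qed.

Lemma perm_succ_neq (s : {perm 'I_n}) (i j : 'I_n) : j = i.+1 :> nat -> (s i : nat) != s j.
Proof.
move=> ji; rewrite (inj_eq val_inj) (inj_eq perm_inj).
by apply/eqP => /(congr1 val) /=; lia.
Qed.

Definition rank K x := #|[set y | K y < K x]|.

Lemma rank_lt K x : rank K x < n.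
Proof. by apply: (@card_notin_lt _ x); rewrite inE ltnn. Qed.

Definition ord_rank K x : 'I_n := Ordinal (rank_lt K x).

Lemma ltn_rank K x y : (rank K x < rank K y) = (K x < K y).
Proof.
case: (ltnP (K x) (K y)) => xy.
  apply: proper_card; apply/properP; split; last by exists x; rewrite !inE ?ltnn.
  by apply/subsetP => z; rewrite !inE => zx; lia.
apply/negbTE; rewrite -leqNgt; apply: subset_leq_card.
by apply/subsetP => z; rewrite !inE => zy; lia.
Qed.

Lemma ord_rank_inj K : injective K -> injective (ord_rank K).
Proof.
move=> Kinj x y /(congr1 val) /= rxy; apply: Kinj.
by case: (ltngtP (K x) (K y)) => // h; rewrite -(ltn_rank K) rxy ltnn in h.
Qed.

Lemma rank_adjacent K x y z :
  rank K y = (rank K x).+1 -> K x < K z -> K z < K y -> False.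
Proof. by rewrite -(ltn_rank K x z) -(ltn_rank K z y) => ->; lia. Qed.

Lemma rank_perm K (s : {perm 'I_n}) :
  (forall x y, (K x < K y) = (s x < s y)) -> forall x, rank K x = s x.
Proof.
move=> Ks x; rewrite /rank; have -> : [set y | K y < K x] = s @^-1: [set j : 'I_n | j < s x].
  by apply/setP => y; rewrite !inE Ks.
by rewrite card_preimset ?card_ltn_ord //; [apply: ltnW | apply: perm_inj].
Qed.

Lemma rel_along_run (T : Type) (r : rel T) (P : pred 'I_n) (f : 'I_n -> T) :
  transitive r ->
  (forall i j : 'I_n, j = i.+1 :> nat -> P i -> P j -> r (f i) (f j)) ->
  forall i j : 'I_n, i < j -> (forall k : 'I_n, i <= k <= j -> P k) -> r (f i) (f j).
Proof.
move=> r_trans step i j ij run.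
have [d jE] : exists d, j = i + d.+1 :> nat by exists (j - i).-1; lia.
elim: d j ij run jE => [|d IH] j ij run jE.
  by apply: step; rewrite ?jE ?addn1 //; apply: run; lia.
have jlt : i + d.+1 < n by have := ltn_ord j; lia.
apply: (r_trans (f (Ordinal jlt))).
  by apply: IH => /= [|k ki|]; [lia | apply: run; lia | ].
by apply: step => /=; [lia | apply: run | apply: run]; rewrite /=; lia.
Qed.

End Rank.

Lemma ltn_lex a b s t m :
  s < m -> t < m -> (a * m + s < b * m + t) = (a < b) || (a == b) && (s < t).
Proof.
move=> sm tm; case: (ltngtP a b) => ab /=.
- have : a * m + m <= b * m by rewrite -mulSnr leq_mul2r ab orbT.
  lia.
- have : b * m + m <= a * m by rewrite -mulSnr leq_mul2r ab orbT.
  lia.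
- by rewrite ab ltn_add2l.
Qed.

Section Level.
Variable n : nat.
Implicit Types (R : prel n) (x y u : 'I_n).

Definition minimal R x := ~~ [exists z, lt_R R z x].
Definition below R u := [set z | lt_R R z u].
Definition nbelow R u := #|below R u|.

(* For a minimal [x] this is the least [nbelow R u] over the [u] above [x],
   and [n] when nothing lies above [x]. *)
Definition level R x :=
  if minimal R x then n - \max_(u | lt_R R x u) (n - nbelow R u) else nbelow R x.

(* Within a level, minimal elements come first, in decreasing order, and the
   others follow in increasing order. *)
Definition tiebreak (b : bool) x := if b then n.-1 - x else n + x.
Definition key R x := level R x * (2 * n) + tiebreak (minimal R x) x.

Lemma tiebreak_lt b x : tiebreak b x < 2 * n.
Proof. by have := ltn_ord x; rewrite /tiebreak; case: b; lia. Qed.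

Lemma key_ltE R x y : (key R x < key R y) =
  (level R x < level R y) ||
  (level R x == level R y) && (tiebreak (minimal R x) x < tiebreak (minimal R y) y).
Proof. by rewrite /key ltn_lex // tiebreak_lt. Qed.

Lemma key_inj R : injective (key R).
Proof.
move=> x y kxy; have := key_ltE R x y; have := key_ltE R y x.
rewrite kxy ltnn; have := ltn_ord x; have := ltn_ord y.
rewrite /tiebreak; case: (minimal R x); case: (minimal R y) => ? ? ? ?;
  by apply: val_inj => /=; lia.
Qed.

Lemma nbelow_lt R u : nbelow R u < n.
Proof. by apply: (@card_notin_lt _ _ u); rewrite inE /lt_R eqxx. Qed.

Lemma level_le_n R x : level R x <= n.
Proof. by rewrite /level; case: minimal; [lia | exact: ltnW (nbelow_lt _ _)]. Qed.

Lemma level_nonminimal R x : ~~ minimal R x -> level R x = nbelow R x.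
Proof. by rewrite /level => /negbTE ->. Qed.

Lemma level_le_nbelow R x u : minimal R x -> lt_R R x u -> level R x <= nbelow R u.
Proof.
move=> mx xu; rewrite /level mx.
have := @leq_bigmax_cond _ (lt_R R x) (fun u => n - nbelow R u) u xu.
by have := nbelow_lt R u; lia.
Qed.

Lemma level_minimal_cases R x : minimal R x ->
  (level R x = n /\ forall u, ~~ lt_R R x u) \/
  exists2 u, lt_R R x u & level R x = nbelow R u.
Proof.
move=> mx; case: (pickP (lt_R R x)) => [u0 xu0 | none]; last first.
  by left; split=> [|u]; rewrite ?none // /level mx big_pred0 // subn0.
right; case: (@arg_maxnP _ u0 (lt_R R x) (fun u => n - nbelow R u) xu0) => u xu umax.
exists u => //; rewrite /level mx.
have -> : \max_(v | lt_R R x v) (n - nbelow R v) = n - nbelow R u.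
  apply/eqP; rewrite eqn_leq (@leq_bigmax_cond _ (lt_R R x) (fun v => _) u xu) andbT.
  exact/bigmax_leqP.
by have := nbelow_lt R u; lia.
Qed.

Lemma incomp_R_lt R a b : a != b -> ~~ lt_R R a b -> ~~ lt_R R b a -> incomp_R R a b.
Proof.
move=> ab; have ba : b != a by rewrite eq_sym.
by rewrite /incomp_R /lt_R ab ba /= => -> ->.
Qed.

Section GoodPoset.
Variable R : prel n.
Hypothesis goodR : good_poset R.

Let le_refl x : le_R R x x.
Proof. by case/and4P: goodR => /and3P[/forallP]. Qed.

Lemma lt_R_natural x y : lt_R R x y -> x < y.
Proof. by case/and4P: goodR => _ /forallP/(_ x)/forallP/(_ y)/implyP. Qed.

Let no_chain3 x y z : lt_R R x y -> lt_R R y z -> False.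
Proof.
case/and4P: goodR => _ _ /negP no3 _ xy yz; apply: no3.
by apply/existsP; exists x; apply/existsP; exists y; apply/existsP; exists z; rewrite xy yz.
Qed.

Let no_2plus2 i j k l : uniq [:: i; j; k; l] -> lt_R R i j -> lt_R R k l ->
  incomp_R R i k -> incomp_R R i l -> incomp_R R j k -> incomp_R R j l -> False.
Proof.
case/and4P: goodR => _ _ _ /negP no22 ijkl ij kl ik il jk jl; apply: no22.
apply/existsP; exists i; apply/existsP; exists j; apply/existsP; exists k; apply/existsP; exists l.
by rewrite ijkl ij kl ik il jk jl.
Qed.

Lemma lt_R_minimal x y : lt_R R x y -> minimal R x && ~~ minimal R y.
Proof.
move=> xy; rewrite negbK; apply/andP; split; last by apply/existsP; exists x.
by apply/negP => /existsP[z zx]; apply: no_chain3 zx xy.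
Qed.

Lemma below_nested u v : below R u \subset below R v \/ below R v \subset below R u.
Proof.
case: (boolP (below R u \subset below R v)) => [|/subsetPn[m mu mv]]; [by left | right].
apply/subsetP => m' m'v; apply/negPn/negP => m'u.
move: mu mv m'v m'u; rewrite !inE => mu mv m'v m'u.
have /andP[mm nmu] := lt_R_minimal mu; have /andP[mm' nmv] := lt_R_minimal m'v.
have to_min a b : minimal R b -> ~~ lt_R R a b.
  by move=> mb; apply/negP => /lt_R_minimal; rewrite mb andbF.
have from_nonmin a b : ~~ minimal R a -> ~~ lt_R R a b.
  by move=> ma; apply/negP => /lt_R_minimal; rewrite (negbTE ma).
have neq a b : minimal R a -> ~~ minimal R b -> a != b.
  by move=> ma; apply: contraNneq => <-.
have mm'_neq : m != m' by apply: contraNneq m'u => <-.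
have uv : u != v by apply: contraNneq mv => <-.
apply: (@no_2plus2 m u m' v) => //.
- by rewrite /= !inE !negb_or mm'_neq uv (neq m u) // (neq m v) // (neq m' v) // eq_sym neq.
- exact: incomp_R_lt mm'_neq (to_min _ _ mm') (to_min _ _ mm).
- exact: incomp_R_lt (neq m v mm nmv) mv (from_nonmin _ _ nmv).
- by apply: incomp_R_lt (from_nonmin _ _ nmu) m'u; rewrite eq_sym neq.
- exact: incomp_R_lt uv (from_nonmin _ _ nmu) (from_nonmin _ _ nmv).
Qed.

Lemma nbelow_ltn_proper u v : nbelow R u < nbelow R v -> below R u \proper below R v.
Proof.
move=> uv; case: (below_nested u v) => sub; first by rewrite properEcard sub.
by move: (subset_leq_card sub); rewrite /nbelow in uv; lia.
Qed.

Lemma key_lt_of_lt x y : lt_R R x y -> key R x < key R y.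
Proof.
move=> xy; have /andP[mx nmy] := lt_R_minimal xy.
rewrite key_ltE mx (negbTE nmy) (level_nonminimal nmy) /tiebreak.
by have := level_le_nbelow mx xy; have := ltn_ord x; lia.
Qed.

Lemma lt_of_key_lt x y : minimal R x -> ~~ minimal R y -> key R x < key R y -> lt_R R x y.
Proof.
move=> mx nmy; apply: contraTT => nxy.
rewrite key_ltE mx (negbTE nmy) (level_nonminimal nmy) /tiebreak.
have := nbelow_lt R y; have := ltn_ord x.
case: (level_minimal_cases mx) => [[-> _] | [u xu ->]]; first lia.
case: (below_nested u y) => sub.
  by move/subsetP: sub => /(_ x); rewrite !inE xu (negbTE nxy) => /(_ isT).
have : nbelow R y < nbelow R u.
  by apply: proper_card; apply/properP; split => //; exists x; rewrite !inE.
lia.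
Qed.

Lemma le_R_keyE x y :
  le_R R x y = (x == y) || [&& minimal R x, ~~ minimal R y & key R x < key R y].
Proof.
have [<-|xy] /= := eqVneq x y; first exact: le_refl.
apply/idP/and3P => [le_xy | [mx nmy /(lt_of_key_lt mx nmy)/andP[] //]].
have lt_xy : lt_R R x y by rewrite /lt_R xy.
by have /andP[-> ->] := lt_R_minimal lt_xy; rewrite key_lt_of_lt.
Qed.

Lemma key_rank0_minimal x : rank (key R) x = 0 -> minimal R x.
Proof. by move=> rx; apply/negP => /existsP[z /key_lt_of_lt]; rewrite -ltn_rank rx. Qed.

Lemma key_adjacent_minimal_gtn x y : minimal R x -> minimal R y ->
  rank (key R) y = (rank (key R) x).+1 -> ~~ (x < y).
Proof.
move=> mx my rxy; apply/negP => xy.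
have : key R x < key R y by rewrite -ltn_rank rxy.
rewrite key_ltE mx my /tiebreak; have := ltn_ord y; have := level_le_n R y.
case: (level_minimal_cases mx) => [[-> _] | [u xu ->] _ _ kxy]; first lia.
apply: (rank_adjacent rxy (key_lt_of_lt xu)).
have /andP[_ nmu] := lt_R_minimal xu.
by rewrite key_ltE (negbTE nmu) my (level_nonminimal nmu); lia.
Qed.

Lemma key_adjacent_nonminimal_ltn x y : ~~ minimal R x -> ~~ minimal R y ->
  rank (key R) y = (rank (key R) x).+1 -> ~~ (y < x).
Proof.
move=> nmx nmy rxy; apply/negP => yx.
have : key R x < key R y by rewrite -ltn_rank rxy.
rewrite key_ltE (negbTE nmx) (negbTE nmy) !level_nonminimal // /tiebreak => kxy.
have /properP[_ [m my mx]] : below R x \proper below R y.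
  by apply: nbelow_ltn_proper; lia.
move: my mx; rewrite !inE => my mx; have /andP[mm _] := lt_R_minimal my.
apply: (rank_adjacent rxy _ (key_lt_of_lt my)).
case: (level_minimal_cases mm) => [[_ /(_ y)] | [u mu lm]]; first by rewrite my.
case: (below_nested x u) => sub; last first.
  by move/subsetP: sub => /(_ m); rewrite !inE mu (negbTE mx) => /(_ isT).
have : nbelow R x < nbelow R u.
  by apply: proper_card; apply/properP; split => //; exists m; rewrite !inE.
by rewrite key_ltE (negbTE nmx) mm (level_nonminimal nmx) lm => ->.
Qed.

End GoodPoset.

Definition key_perm R : 'S_n := perm (ord_rank_inj (@key_inj R)).
Definition to_bicol R : bicol_perm n := ((key_perm R)^-1%g, [ffun x => minimal R x]).
Definition to_poset (p : bicol_perm n) : prel n :=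
  [set xy | (xy.1 == xy.2) ||
            [&& p.2 xy.1, ~~ p.2 xy.2 & (p.1)^-1%g xy.1 < (p.1)^-1%g xy.2]].

Lemma key_permE R x : key_perm R x = ord_rank (key R) x.
Proof. by rewrite permE. Qed.

Lemma rank_key_perm_inv R i : rank (key R) ((key_perm R)^-1%g i) = i.
Proof. by rewrite -[RHS](congr1 val (permKV (key_perm R) i)) key_permE. Qed.

Lemma to_posetK R : good_poset R -> to_poset (to_bicol R) = R.
Proof.
move=> goodR; apply/setP => -[x y]; rewrite inE /= invgK !ffunE !key_permE /=.
by rewrite ltn_rank -[(x, y) \in R]/(le_R R x y) (le_R_keyE goodR).
Qed.

Lemma to_bicol_in_B R : good_poset R -> in_B (to_bicol R).
Proof.
move=> goodR; rewrite /in_B /red /blue /val_at /=.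
set s := (key_perm R)^-1%g.
have rank_s i : rank (key R) (s i) = i by apply: rank_key_perm_inv.
apply/and4P; split.
- apply/forallP => i; apply/implyP => /eqP i0; rewrite ffunE.
  by apply: (key_rank0_minimal goodR); rewrite rank_s.
- apply/forallP => i; apply/forallP => j; rewrite !ffunE eqbF_neg.
  apply/negP => /and4P[/eqP ji mi mj]; apply/negP.
  by apply: (key_adjacent_minimal_gtn goodR) => //; rewrite !rank_s ji.
- apply/forallP => i; apply/forallP => j; rewrite !ffunE eqbF_neg.
  apply/negP => /and4P[/eqP ji nmi nmj]; apply/negP.
  by apply: (key_adjacent_nonminimal_ltn goodR) => //; rewrite !rank_s ji.
- apply/forallP => i; apply/forallP => j; rewrite !ffunE eqbF_neg.
  apply/negP => /and4P[ij mi nmj]; apply/negP; rewrite -leqNgt ltnW //.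
  by apply/(lt_R_natural goodR)/(lt_of_key_lt goodR) => //; rewrite -ltn_rank !rank_s.
Qed.
End Level.

Section FromBicol.
Variable n : nat.
Variable p : bicol_perm n.
Hypothesis pB : in_B p.
Local Notation q := p.1.
Local Notation col := p.2.
Local Notation pos := (p.1)^-1%g.
Local Notation R := (to_poset p).
Implicit Types (a b x y : 'I_n) (i j k : 'I_n).

Let qpos x : q (pos x) = x. Proof. exact: permKV. Qed.
Let posq i : pos (q i) = i. Proof. exact: permK. Qed.

Let first_blue i : i = 0 :> nat -> col (q i).
Proof. by case/and4P: pB => /forallP/(_ i)/implyP + _ _ _ i0; apply; apply/eqP. Qed.

Let no_blue_ascent i j : j = i.+1 :> nat -> col (q i) -> col (q j) -> ~~ (q i < q j).
Proof.
case/and4P: pB => _ /forallP/(_ i)/forallP/(_ j)/eqP h _ _ ji bi bj.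
apply/negP => ij; move: h; rewrite /blue /val_at bi bj ij !andbT.
by have -> : (val j == (val i).+1) = true by apply/eqP.
Qed.

Let no_red_descent i j : j = i.+1 :> nat -> ~~ col (q i) -> ~~ col (q j) -> ~~ (q j < q i).
Proof.
case/and4P: pB => _ _ /forallP/(_ i)/forallP/(_ j)/eqP h _ ji ri rj.
apply/negP => ji'; move: h; rewrite /red /blue /val_at ri rj ji' !andbT.
by have -> : (val j == (val i).+1) = true by apply/eqP.
Qed.

Let no_blue_red_inversion i j : i < j -> col (q i) -> ~~ col (q j) -> ~~ (q j < q i).
Proof.
case/and4P: pB => _ _ _ /forallP/(_ i)/forallP/(_ j)/eqP h ij bi rj.
by apply/negP => ji; move: h; rewrite /red /blue /val_at ij bi rj ji.
Qed.

Lemma lt_to_posetE x y : lt_R R x y = [&& col x, ~~ col y & pos x < pos y].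
Proof. by rewrite /lt_R /le_R inE /=; case: (eqVneq x y) => [<-|//]; case: (col x). Qed.

Lemma le_to_posetE x y : le_R R x y = (x == y) || [&& col x, ~~ col y & pos x < pos y].
Proof. by rewrite /le_R inE. Qed.

Lemma blue_red_ltn x y : col x -> ~~ col y -> pos x < pos y -> x < y.
Proof.
move=> bx ry xy; have := no_blue_red_inversion xy; rewrite !qpos => /(_ bx ry).
have : x != y by apply: contraNneq ry => <-.
by rewrite -(inj_eq val_inj) /=; lia.
Qed.

Lemma to_poset_good : good_poset R.
Proof.
apply/and4P; split.
- apply/and3P; split.
  + by apply/forallP => x; rewrite le_to_posetE eqxx.
  + apply/forallP => x; apply/forallP => y; apply/implyP; rewrite !le_to_posetE.
    case: (eqVneq x y) => //= _ /andP[/and3P[_ ry _] /and3P[by' _ _]].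
    by rewrite by' in ry.
  + apply/forallP => x; apply/forallP => y; apply/forallP => z; apply/implyP.
    rewrite !le_to_posetE => /andP[].
    case: (eqVneq x y) => [-> _ // | _ /= xy].
    case: (eqVneq y z) => [<- _ | _ /=]; first by rewrite xy orbT.
    by case/and3P: xy => _ ry _ /and3P[by' _ _]; rewrite by' in ry.
- apply/forallP => x; apply/forallP => y; apply/implyP.
  by rewrite lt_to_posetE => /and3P[bx ry xy]; apply: blue_red_ltn.
- apply/negP => /existsP[x /existsP[y /existsP[z]]]; rewrite !lt_to_posetE.
  by case/andP => /and3P[_ ry _] /and3P[by' _ _]; rewrite by' in ry.
- apply/negP => /existsP[i /existsP[j /existsP[k /existsP[l]]]].
  case/and5P => _ + + _ /and3P[+ + _]; rewrite !lt_to_posetE /incomp_R !le_to_posetE.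
  move=> /and3P[bi rj ij] /and3P[bk rl kl] /andP[/norP[_]] + _ /andP[_ /norP[_]].
  by rewrite bi bk rj rl /=; lia.
Qed.

Lemma minimal_to_posetE x : minimal R x = col x.
Proof.
case: (boolP (col x)) => bx.
  by apply/negP => /existsP[z]; rewrite lt_to_posetE bx andbF.
have n_gt0 : 0 < n by have := ltn_ord x; lia.
pose z := q (Ordinal n_gt0); have bz : col z by apply: first_blue.
apply/negbTE; rewrite negbK; apply/existsP; exists z.
rewrite lt_to_posetE bz bx /z posq /= lt0n.
by apply: contraNneq bx => /first_blue; rewrite qpos.
Qed.

Definition nblue_before k := #|[set z | col z && (pos z < k)]|.

Lemma nbelow_to_poset u : ~~ col u -> nbelow R u = nblue_before (pos u).
Proof. by move=> ru; apply: eq_card => z; rewrite !inE lt_to_posetE ru. Qed.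

Lemma nblue_before_mono k k' : k <= k' -> nblue_before k <= nblue_before k'.
Proof.
move=> kk'; apply: subset_leq_card; apply/subsetP => z.
by rewrite !inE => /andP[-> zk] /=; lia.
Qed.

Lemma nblue_before_strict z k k' : col z -> k <= pos z < k' ->
  nblue_before k < nblue_before k'.
Proof.
move=> bz /andP[kz zk']; apply: proper_card; apply/properP; split.
  by apply/subsetP => y; rewrite !inE => /andP[-> yk] /=; lia.
by exists z; rewrite !inE bz //= -leqNgt.
Qed.

Lemma nblue_before_lt_level b k : col b -> k <= pos b -> nblue_before k < level R b.
Proof.
move=> bb kb; have mb : minimal R b by rewrite minimal_to_posetE.
case: (level_minimal_cases mb) => [[-> _] | [v bv ->]].
  by apply: (@card_notin_lt _ _ b); rewrite inE bb /= -leqNgt.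
move: bv; rewrite lt_to_posetE bb => /and3P[_ rv bv].
by rewrite nbelow_to_poset //; apply: (nblue_before_strict bb); rewrite kb.
Qed.

Lemma blue_run_gtn a b : pos a < pos b ->
  (forall k, pos a <= k <= pos b -> col (q k)) -> b < a.
Proof.
move=> ab run; rewrite -[a]qpos -[b]qpos.
have gtn_trans : transitive (fun u v : nat => v < u).
  by move=> ? ? ? h1 h2; exact: ltn_trans h2 h1.
apply: (rel_along_run (f := fun k => q k : nat) gtn_trans _ ab run) => i j ji bi bj.
by have := no_blue_ascent ji bi bj; have := perm_succ_neq q ji; lia.
Qed.

Lemma red_run_ltn a b : pos a < pos b ->
  (forall k, pos a <= k <= pos b -> ~~ col (q k)) -> a < b.
Proof.
move=> ab run; rewrite -[a]qpos -[b]qpos.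
apply: (rel_along_run (f := fun k => q k : nat) ltn_trans _ ab run) => i j ji ri rj.
by have := no_red_descent ji ri rj; have := perm_succ_neq q ji; lia.
Qed.

Lemma key_lt_blue_blue a b : col a -> col b -> pos a < pos b -> key R a < key R b.
Proof.
move=> ba bb ab; have ma : minimal R a by rewrite minimal_to_posetE.
have mb : minimal R b by rewrite minimal_to_posetE.
rewrite key_ltE ma mb /tiebreak.
case: (boolP [forall k : 'I_n, (pos a <= k <= pos b) ==> col (q k)]) =>
  [/forallP run | /forallPn[k]].
  have : level R a <= level R b.
    case: (level_minimal_cases mb) => [[-> _] | [v bv ->]]; first exact: level_le_n.
    apply: level_le_nbelow => //; move: bv; rewrite !lt_to_posetE ba => /and3P[_ -> bv] /=.
    lia.
  by have := blue_run_gtn ab (fun k => implyP (run k)); have := ltn_ord a; lia.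
rewrite negb_imply => /andP[/andP[ak kb] rk].
have ak' : pos a < k.
  by rewrite ltn_neqAle ak andbT; apply: contraNneq rk => /val_inj <-; rewrite qpos.
have a_below_k : lt_R R a (q k) by rewrite lt_to_posetE ba rk posq.
have := level_le_nbelow ma a_below_k; rewrite nbelow_to_poset // posq.
by have := nblue_before_lt_level bb kb; lia.
Qed.

Lemma key_lt_red_blue a b : ~~ col a -> col b -> pos a < pos b -> key R a < key R b.
Proof.
move=> ra bb ab; have nma : ~~ minimal R a by rewrite minimal_to_posetE.
rewrite key_ltE (negbTE nma) (level_nonminimal nma) nbelow_to_poset //.
by rewrite (nblue_before_lt_level bb (ltnW ab)).
Qed.

Lemma key_lt_red_red a b : ~~ col a -> ~~ col b -> pos a < pos b -> key R a < key R b.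
Proof.
move=> ra rb ab; have nma : ~~ minimal R a by rewrite minimal_to_posetE.
have nmb : ~~ minimal R b by rewrite minimal_to_posetE.
rewrite key_ltE (negbTE nma) (negbTE nmb) !level_nonminimal // !nbelow_to_poset // /tiebreak.
have := nblue_before_mono (ltnW ab).
case: (boolP [forall k : 'I_n, (pos a <= k <= pos b) ==> ~~ col (q k)]) =>
  [/forallP run | /forallPn[k]].
  by have := red_run_ltn ab (fun k => implyP (run k)); lia.
rewrite negb_imply negbK => /andP[/andP[ak kb] bk].
have kb' : k < pos b.
  by rewrite ltn_neqAle kb andbT; apply: contraNneq rb => /val_inj ek; rewrite -(qpos b) -ek.
have : nblue_before (pos a) < nblue_before (pos b).
  by apply: (@nblue_before_strict (q k)); rewrite // posq ak kb'.
lia.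
Qed.

Lemma key_lt_of_pos_lt a b : pos a < pos b -> key R a < key R b.
Proof.
move=> ab; case: (boolP (col a)) => ca; case: (boolP (col b)) => cb.
- exact: key_lt_blue_blue.
- by apply: (key_lt_of_lt to_poset_good); rewrite lt_to_posetE ca cb.
- exact: key_lt_red_blue.
- exact: key_lt_red_red.
Qed.

Lemma key_to_posetE a b : (key R a < key R b) = (pos a < pos b).
Proof.
apply/idP/idP => [kab | /key_lt_of_pos_lt //].
case: (ltngtP (pos a) (pos b)) => // [ba | /val_inj/perm_inj ab].
  by have := key_lt_of_pos_lt ba; lia.
by rewrite ab ltnn in kab.
Qed.

Lemma to_bicolK : to_bicol R = p.
Proof.
rewrite [RHS]surjective_pairing /to_bicol; congr (_, _).
  suff -> : key_perm R = pos by rewrite invgK.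
  apply/permP => x; apply: val_inj; rewrite key_permE /=.
  by apply: rank_perm; exact: key_to_posetE.
by apply/ffunP => x; rewrite ffunE minimal_to_posetE.
Qed.

End FromBicol.

(* The bijection exists for [n = 0] as well. *)
Theorem proposition8 (n : nat) (hn : (1 <= n)%N) :
  exists f : {R : prel n | good_poset R} -> {p : bicol_perm n | in_B p},
    bijective f.
Proof.
exists (fun R => exist _ (to_bicol (sval R)) (to_bicol_in_B (svalP R))).
exists (fun p => exist _ (to_poset (sval p)) (to_poset_good (svalP p))).
  by move=> [R goodR]; apply: val_inj; exact: to_posetK.
by move=> [p pB]; apply: val_inj; exact: to_bicolK.
Qed.
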